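(* Let $X$ be a nonempty finite set and let $NG$ be an NG-group on $X$. Then the directed multigraph $(NG)_{dig}$ is not strongly connected.
   Context: An NG-group on a set $X$ is a set of maps $X \to X$ that forms a group under composition of functions and is not contained in the symmetric group $\mathrm{Sym}(X)$. The directed multigraph $(NG)_{dig}$ has vertex set $X$. For every $f \in NG$ and every $x \in X$ there is one arc from $x$ to $f(x)$. A digraph is strongly connected if for every ordered pair of vertices $(u, v)$ there is a directed path from $u$ to $v$. *)

From mathcomp Require Import all_boot.
Set Implicit Arguments. Unset Strict Implicit. Unset Printing Implicit Defensive.

Definition fcomp (X : finType) (f g : {ffun X -> X}) : {ffun X -> X} :=
  [ffun x => f (g x)].

Definition is_group_of_maps (X : finType) (G : {set {ffun X -> X}}) : Prop :=
  (forall f g, f \in G -> g \in G -> fcomp f g \in G) /\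
  exists2 e, e \in G &
    (forall f, f \in G -> fcomp e f = f /\ fcomp f e = f) /\
    (forall f, f \in G -> exists2 g, g \in G & fcomp f g = e /\ fcomp g f = e).

Definition not_in_Sym (X : finType) (G : {set {ffun X -> X}}) : Prop :=
  exists2 f, f \in G & ~ bijective f.

Definition NG_group (X : finType) (G : {set {ffun X -> X}}) : Prop :=
  is_group_of_maps G /\ not_in_Sym G.

(* Arc relation of (NG)_dig: an arc x -> f x for each f in G (multiplicities
   are irrelevant for reachability). *)
Definition dig_rel (X : finType) (G : {set {ffun X -> X}}) : rel X :=
  fun x y => [exists f in G, f x == y].

Definition strongly_connected (X : finType) (e : rel X) : Prop :=
  forall u v : X, connect e u v.

From mathcomp Require Import all_boot.
Set Implicit Arguments. Unset Strict Implicit. Unset Printing Implicit Defensive.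

(* Every member g of an NG-group factors as g = e g = f (h g) through any
   member f with inverse h, so all arcs of (NG)_dig end in the image of f.
   Taking f non-bijective, hence non-surjective since X is finite, a vertex u
   outside that image has no incoming arc, so u is unreachable from f u. *)

Lemma codom_total_bij (T : finType) (f : T -> T) :
  (forall y, y \in codom f) -> bijective f.
Proof.
move=> onto; apply: injF_bij; apply: in2T; apply/image_injP.
by apply/eqP/eq_card => y; rewrite onto.
Qed.

Lemma not_bij_codom (T : finType) (f : T -> T) :
  ~ bijective f -> exists u, u \notin codom f.
Proof.
move=> nbij; have [/existsP // | /existsPn onto] := boolP [exists u, u \notin codom f].
by case: nbij; apply: codom_total_bij => y; rewrite -[_ \in _]negbK onto.
Qed.

Lemma group_of_maps_codom (X : finType) (G : {set {ffun X -> X}}) f g x :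
  is_group_of_maps G -> f \in G -> g \in G -> g x \in codom f.
Proof.
move=> [_ [e _ [eid einv]]] fG gG.
have [h _ [fh _]] := einv f fG; have [eg _] := eid g gG.
by apply/codomP; exists (h (g x)); rewrite -{1}eg -fh !ffunE.
Qed.

Lemma connect_to_notin (T : finType) (e : rel T) (A : {pred T}) v u :
  (forall x y, e x y -> y \in A) -> u \notin A -> connect e v u -> v = u.
Proof.
move=> arcA uA /connectP[p]; case/lastP: p => [_ -> // | p y].
rewrite rcons_path last_rcons => /andP[_ /arcA yA] uy.
by rewrite uy yA in uA.
Qed.

Theorem mainTheorem5 (X : finType) (G : {set {ffun X -> X}}) :
  0 < #|X| -> NG_group G -> ~ strongly_connected (dig_rel G).
Proof.
move=> _ [grG [f fG nbij]] sc.
have [u uf] := not_bij_codom nbij.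
have arcs_in_codom x y : dig_rel G x y -> y \in codom f.
  by case/existsP=> g /andP[gG /eqP <-]; exact: group_of_maps_codom grG fG gG.
have fuu := connect_to_notin arcs_in_codom uf (sc (f u) u).
by rewrite -fuu codom_f in uf.
Qed.
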